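(* In the setting below, with $\gamma=(1+\sqrt2)^2$, there exist constants $C_1,C_2>0$ such that for all $N\in\mathbb{N}_0$ and all $M\ge C_1N^2\gamma^N$, the matrix $\hat H_N^{(M)}$ is invertible and $\|(H_N^{(M)})^\dagger\|_{\ell^2}\le C_2\gamma^N$.
   Context: For $M,N\in\mathbb{N}$ and $0\le\delta\le2/M$ let $x_m=-1+\delta+2m/M$, $m=0,\dots,M-1$, and let $\hat H_N^{(M)}$ be the $N\times N$ matrix $(\hat H_N^{(M)})_{k\ell}=\frac1M\sum_{m=0}^{M-1}x_m^kx_m^\ell$, $k,\ell\in\{0,\dots,N-1\}$. $H_N^{(M)}$ is its lift to $\ell^2(\mathbb{N}_0)$ (acting as $\hat H_N^{(M)}$ on the first $N$ coordinates and as $0$ on the orthogonal complement), and, when $\hat H_N^{(M)}$ is invertible, $(H_N^{(M)})^\dagger$ is the lift of $(\hat H_N^{(M)})^{-1}$ in the same way. $\|\cdot\|_{\ell^2}$ is the operator norm on $\ell^2(\mathbb{N}_0)$. *)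

From HB Require Import structures.
From mathcomp Require Import all_boot all_order all_algebra.
From mathcomp Require Import all_classical all_reals all_analysis.
Set Implicit Arguments. Unset Strict Implicit. Unset Printing Implicit Defensive.
Import Order.TTheory GRing.Theory Num.Theory.
Local Open Scope ring_scope.

Definition xpt (R : realType) (M : nat) (delta : R) (m : nat) : R :=
  -1 + delta + 2 * m%:R / M%:R.

Definition hatH (R : realType) (N M : nat) (delta : R) : 'M[R]_N :=
  \matrix_(k < N, l < N)
     (M%:R^-1 * \sum_(0 <= m < M) xpt M delta m ^+ k * xpt M delta m ^+ l).

(* Lift of an N x N matrix to an operator on sequences (l^2(N_0)):
   acts as A on the first N coordinates and as 0 on the complement. *)
Definition lift_l2 (R : realType) (N : nat) (A : 'M[R]_N) (u : nat -> R) : nat -> R :=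
  fun k => match insub k : option 'I_N with
           | Some i => \sum_(j < N) A i j * u j
           | None => 0
           end.

(* Squared l^2 norm of a sequence, as an extended real (+oo if not in l^2). *)
Definition l2norm2 (R : realType) (u : nat -> R) : \bar R :=
  (\sum_(k <oo) ((u k) ^+ 2)%:E)%E.

Definition opnorm_le (R : realType) (T : (nat -> R) -> (nat -> R)) (c : R) : Prop :=
  forall u : nat -> R, (l2norm2 u < +oo)%E -> (l2norm2 (T u) <= (c ^+ 2)%:E * l2norm2 u)%E.

Definition gamma (R : realType) : R := (1 + Num.sqrt 2) ^+ 2.

From HB Require Import structures.
From mathcomp Require Import all_boot all_order all_algebra.
From mathcomp Require Import all_classical all_reals all_analysis.
From mathcomp Require Import ring lra zify.
Import Order.TTheory GRing.Theory Num.Theory.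
Local Open Scope ring_scope.
Set Implicit Arguments. Unset Strict Implicit. Unset Printing Implicit Defensive.

(* [hatH N M delta] is the Gram matrix of the monomials 1, x, ..., x^(N-1) for the uniform
   probability on the grid; its continuous counterpart H is the Hankel matrix of the moments
   m_n = (1/2) \int_{-1}^1 x^n dx.  Expanding p = \sum_k y_k x^k as p = \sum_j a_j P_j in
   Legendre polynomials gives mean(p^2) = \sum_j a_j^2 / (2j+1) and y_k = \sum_j a_j (P_j)_k, so
   by Cauchy-Schwarz |y|^2 <= mean(p^2) * \sum_j (2j+1) |P_j|^2, |P_j| the norm of the coefficient
   vector.  The three-term recurrence bounds the l^1 norm of the coefficients of P_j by a constant
   times (1 + sqrt 2)^j / sqrt(2j+1), whence |y|^2 <= 3 gamma^N y^T H y.  The grid moments are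
   within 2n/M of m_n, so the discrete quadratic form is within 4 N^2 / M |y|^2 of the continuous
   one, and M >= 24 N^2 gamma^N gives |y|^2 <= 6 gamma^N y^T hatH y: hatH is invertible and
   ||hatH^-1|| <= 6 gamma^N. *)

Section PolyNatM.
Variable R : nzRingType.
Implicit Types (p : {poly R}) (x : R) (k i : nat).

Lemma coef_natM k p i : (k%:R * p)`_i = k%:R * p`_i.
Proof. by rewrite -polyC_natr coefCM. Qed.

Lemma deriv_natM k p : (k%:R * p)^`() = k%:R * p^`().
Proof. by rewrite -polyC_natr !mul_polyC derivZ. Qed.

Lemma horner_natM k p x : (k%:R * p).[x] = k%:R * p.[x].
Proof. by rewrite -polyC_natr hornerCM. Qed.

End PolyNatM.

Section UniformMean.
Variable R : realFieldType.
Implicit Types (p q : {poly R}) (n k : nat).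

(* [unif_moment n] is (1/2) \int_{-1}^1 x^n dx, and [unif_mean p] the mean of p over [-1, 1]. *)
Definition unif_moment n : R := if odd n then 0 else n.+1%:R^-1.
Definition unif_mean p : R := \sum_(i < size p) p`_i * unif_moment i.

Lemma unif_mean_wide n p : (size p <= n)%N ->
  unif_mean p = \sum_(i < n) p`_i * unif_moment i.
Proof.
move=> le_pn; rewrite /unif_mean -(subnKC le_pn) big_split_ord /=.
rewrite [X in _ + X]big1 ?addr0 // => i _.
by rewrite nth_default ?mul0r // leq_addr.
Qed.

Lemma unif_mean_is_linear : scalar unif_mean.
Proof.
move=> a p q; pose n := maxn (size p) (size q).
have le_pn : (size p <= n)%N by rewrite leq_maxl.
have le_qn : (size q <= n)%N by rewrite leq_maxr.
have le_apq : (size (a *: p + q)%R <= n)%N.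
  by rewrite (leq_trans (size_polyD _ _)) // geq_max (leq_trans (size_scale_leq _ _)).
rewrite !(unif_mean_wide le_pn, unif_mean_wide le_qn, unif_mean_wide le_apq).
rewrite mulr_sumr -big_split /=; apply: eq_bigr => i _.
by rewrite coefD coefZ mulrDl mulrA.
Qed.

HB.instance Definition _ := GRing.isLinear.Build R {poly R} R *%R unif_mean
  unif_mean_is_linear.

Lemma unif_meanXn n : unif_mean 'X^n = unif_moment n.
Proof.
rewrite /unif_mean size_polyXn big_ord_recr /= coefXn eqxx mul1r big1 ?add0r // => i _.
by rewrite coefXn (ltn_eqF (ltn_ord i)) mul0r.
Qed.

Lemma unif_mean1 : unif_mean 1 = 1.
Proof. by rewrite -(expr0 'X) unif_meanXn /unif_moment invr1. Qed.

Lemma unif_mean_natM k p : unif_mean (k%:R * p) = k%:R * unif_mean p.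
Proof. by rewrite mulr_natl raddfMn mulr_natl. Qed.

Lemma unif_moment_telescope n :
  n.+1%:R * unif_moment n = (1 - (-1) ^+ n.+1) / 2 :> R.
Proof.
rewrite /unif_moment -signr_odd /=; case: (odd n); first by rewrite expr0; ring.
by rewrite expr1; field; rewrite addrC natr1 pnatr_eq0.
Qed.

Lemma unif_mean_deriv p : unif_mean p^`() = (p.[1] - p.[-1]) / 2.
Proof.
rewrite (@unif_mean_wide (size p)); last first.
  apply/leq_sizeP => j le_pj.
  by rewrite coef_deriv nth_default ?mul0rn // (leq_trans le_pj).
rewrite !(@horner_coef_wide _ (size p).+1) // -sumrB mulr_suml big_ord_recl /=.
rewrite !expr0 subrr mul0r add0r; apply: eq_bigr => i _.
rewrite coef_deriv -[_ *+ i.+1]mulr_natr -mulrA unif_moment_telescope /bump /= add1n expr1n.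
by ring.
Qed.

End UniformMean.

Section Legendre.
Variable R : realFieldType.
Implicit Types (p q : {poly R}) (n k : nat).

Fixpoint legendre_rec n : {poly R} :=
  match n with
  | 0 => 1
  | 1 => 'X
  | (m.+1 as n).+1 =>
      n.+1%:R^-1 *: ((2 * n + 1)%:R *: (legendre_rec n * 'X) - n%:R *: legendre_rec m)
  end.

Fact legendre_key : unit. Proof. by []. Qed.
Definition legendre := locked_with legendre_key legendre_rec.
Canonical legendre_unlockable := [unlockable fun legendre].

Lemma legendre0 : legendre 0 = 1. Proof. by rewrite unlock. Qed.
Lemma legendre1 : legendre 1 = 'X. Proof. by rewrite unlock. Qed.

(* At n = 0 the last term has coefficient 0, so the truncation of n.-1 is harmless. *)
Lemma legendreS n : n.+1%:R * legendre n.+1 =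
  (2 * n + 1)%:R * (legendre n * 'X) - n%:R * legendre n.-1.
Proof.
rewrite !mulr_natl -!scaler_nat unlock.
case: n => [|n]; first by rewrite /= !scale1r scale0r subr0 mul1r.
by rewrite scalerA mulfV ?scale1r // pnatr_eq0.
Qed.

Lemma natr_poly_neq0 n : (n.+1%:R : {poly R}) != 0.
Proof. by rewrite -polyC_natr polyC_eq0 pnatr_eq0. Qed.

Lemma horner_legendre c n : c ^+ 2 = 1 -> (legendre n).[c] = c ^+ n.
Proof.
move=> c2; elim/ltn_ind: n => -[|[|n]] IH; rewrite ?legendre0 ?legendre1 ?hornerC ?hornerX //.
have := congr1 (fun p => p.[c]) (legendreS n.+1); cbv beta.
rewrite hornerD hornerN !horner_natM hornerMX (IH n.+1) // (IH n) // => E.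
have cSS : c ^+ n.+2 = c ^+ n by rewrite -addn2 exprD c2 mulr1.
apply: (@mulfI _ n.+2%:R); first by rewrite pnatr_eq0.
by rewrite E -exprSr cSS; ring.
Qed.

Lemma deriv_legendreS_of_mulX n :
    (legendre n)^`() * 'X = n%:R * legendre n + (legendre n.-1)^`() ->
  (legendre n.+1)^`() = (2 * n + 1)%:R * legendre n + (legendre n.-1)^`().
Proof.
move=> dXn; apply: (mulfI (natr_poly_neq0 n)).
have := congr1 deriv (legendreS n).
rewrite derivB !deriv_natM derivM derivX mulr1 dXn => ->.
by ring.
Qed.

Lemma deriv_legendre_mulX n :
  (legendre n)^`() * 'X = n%:R * legendre n + (legendre n.-1)^`().
Proof.
elim/ltn_ind: n => -[|[|n]] IH.
- by rewrite legendre0 -polyC1 derivC !mul0r add0r.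
- by rewrite legendre1 legendre0 derivX -polyC1 derivC !mul1r addr0.
have dS := deriv_legendreS_of_mulX (IH n.+1 (ltnSn _)).
have dS' := deriv_legendreS_of_mulX (IH n (ltnW (ltnSn _))).
rewrite [_.-1]/= in dS dS' *; rewrite dS dS' mulrDl IH // legendreS [n.+1.-1]/=.
ring.
Qed.

Lemma deriv_legendreS n :
  (legendre n.+1)^`() = (2 * n + 1)%:R * legendre n + (legendre n.-1)^`().
Proof. exact/deriv_legendreS_of_mulX/deriv_legendre_mulX. Qed.

(* Average P'_(n+2) - P'_n = (2n+3) P_(n+1): the boundary terms cancel as P_j(+-1) = (+-1)^j. *)
Lemma unif_mean_legendre n : unif_mean (legendre n.+1) = 0.
Proof.
have := congr1 (@unif_mean R) (deriv_legendreS n.+1).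
have sqrN1 : (-1 : R) ^+ 2 = 1 by rewrite sqrrN expr1n.
rewrite linearD /= unif_mean_natM !unif_mean_deriv.
rewrite !(horner_legendre _ (expr1n R 2)) !(horner_legendre _ sqrN1) !expr1n.
rewrite -addn2 exprD sqrN1 mulr1 => /eqP; rewrite -subr_eq subrr eq_sym.
by rewrite mulf_eq0 pnatr_eq0 addn1 => /eqP.
Qed.

Lemma unif_mean_legendreMXn k n : (k < n)%N -> unif_mean (legendre n * 'X^k) = 0.
Proof.
elim: k n => [|k IH] [|n] // lt_kn; first by rewrite expr0 mulr1 unif_mean_legendre.
have XS : (2 * n.+1 + 1)%:R * (legendre n.+1 * 'X) =
    n.+2%:R * legendre n.+2 + n.+1%:R * legendre n.
  by rewrite legendreS [_.-1]/=; ring.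
apply: (@mulfI _ (2 * n.+1 + 1)%:R); first by rewrite pnatr_eq0 addn1.
rewrite mulr0 exprS mulrA -unif_mean_natM mulrA XS mulrDl linearD /=.
by rewrite -!mulrA !unif_mean_natM !IH ?mulr0 ?addr0 // ltnW // ltnW.
Qed.

Lemma coef_legendreS n i : n.+1%:R * (legendre n.+1)`_i.+1 =
  (2 * n + 1)%:R * (legendre n)`_i - n%:R * (legendre n.-1)`_i.+1.
Proof. by rewrite -coef_natM legendreS coefB !coef_natM coefMX. Qed.

Lemma size_legendre_le n : (size (legendre n) <= n.+1)%N.
Proof.
elim/ltn_ind: n => -[|[|n]] IH; rewrite ?legendre0 ?legendre1 ?size_poly1 ?size_polyX //.
apply/leq_sizeP => -[//|i] lt_ni; apply: (@mulfI _ n.+2%:R); first by rewrite pnatr_eq0.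
rewrite coef_legendreS [_.-1]/= !nth_default ?mulr0 ?subrr //.
all: by apply: leq_trans (IH _ _) _; lia.
Qed.

Lemma coef_legendre_top_gt0 n : 0 < (legendre n)`_n.
Proof.
elim: n => [|n IH]; first by rewrite legendre0 coefC ltr01.
have top0 : (legendre n.-1)`_n.+1 = 0.
  by rewrite nth_default // (leq_trans (size_legendre_le _)) // ltnS leq_pred.
have := coef_legendreS n n; rewrite top0 mulr0 subr0 => E.
have : 0 < n.+1%:R * (legendre n.+1)`_n.+1 by rewrite E mulr_gt0 // ltr0n addn1.
by rewrite pmulr_rgt0 // ltr0n.
Qed.

Lemma unif_mean_legendre_orth q n : (size q <= n)%N -> unif_mean (q * legendre n) = 0.
Proof.
move=> le_qn; rewrite -[q]coefK poly_def mulr_suml linear_sum big1 // => k _.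
rewrite -scalerAl linearZ /= [_ * legendre n]mulrC unif_mean_legendreMXn ?mulr0 //.
exact: leq_trans (ltn_ord k) le_qn.
Qed.

Lemma unif_mean_legendre_sqr n : (2 * n + 1)%:R * unif_mean (legendre n ^+ 2) = 1.
Proof.
elim: n => [|n IH]; first by rewrite legendre0 expr1n unif_mean1 mulr1.
pose A := unif_mean (legendre n.+1 * ('X * legendre n)).
have lowS : (2 * n.+1 + 1)%:R * A = n.+1%:R * unif_mean (legendre n ^+ 2).
  have := congr1 (fun p => unif_mean (p * legendre n)) (legendreS n.+1); cbv beta.
  rewrite [n.+1.-1]/= mulrBl linearB /= -!mulrA !unif_mean_natM -expr2.
  rewrite [legendre n.+2 * _]mulrC unif_mean_legendre_orth; last first.
    by rewrite (leq_trans (size_legendre_le _)).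
  rewrite mulr0 => /esym/eqP.
  by rewrite subr_eq0 => /eqP.
have highS : n.+1%:R * unif_mean (legendre n.+1 ^+ 2) = (2 * n + 1)%:R * A.
  have := congr1 (fun p => unif_mean (p * legendre n.+1)) (legendreS n); cbv beta.
  rewrite mulrBl linearB /= -!mulrA !unif_mean_natM -expr2.
  rewrite (@unif_mean_legendre_orth (legendre n.-1)) ?mulr0 ?subr0; last first.
    by rewrite (leq_trans (size_legendre_le _)) // ltnS leq_pred.
  by move=> ->; congr (_ * unif_mean _); ring.
apply: (@mulfI _ n.+1%:R); first by rewrite pnatr_eq0.
by rewrite mulrCA highS mulrCA lowS mulrCA IH.
Qed.

Lemma legendre_basis N p : (size p <= N)%N ->
  exists a : nat -> R, p = \sum_(j < N) a j *: legendre j.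
Proof.
elim: N p => [|N IH] p le_pN.
  by exists (fun=> 0); rewrite big_ord0; apply/eqP; rewrite -size_poly_eq0 -leqn0.
pose c := p`_N / (legendre N)`_N.
have top_neq0 : (legendre N)`_N != 0 by rewrite gt_eqF ?coef_legendre_top_gt0.
have [|a Ea] := IH (p - c *: legendre N).
  apply/leq_sizeP => j le_Nj; rewrite coefB coefZ.
  have [<-|neq_Nj] := eqVneq N j; first by rewrite divfK // subrr.
  have lt_Nj : (N < j)%N by rewrite ltn_neqAle neq_Nj.
  by rewrite !nth_default ?mulr0 ?subr0 // (leq_trans (size_legendre_le _), leq_trans le_pN).
exists (fun j => if j == N then c else a j).
rewrite big_ord_recr /= eqxx -[LHS](subrK (c *: legendre N)) Ea.
by congr (_ + _); apply: eq_bigr => i _; rewrite ltn_eqF.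
Qed.

Lemma unif_mean_legendre_mul i j : i != j ->
  unif_mean (legendre i * legendre j) = 0.
Proof.
case: ltngtP => // [lt_ij|lt_ji] _; last rewrite mulrC.
all: by rewrite unif_mean_legendre_orth // (leq_trans (size_legendre_le _)).
Qed.

Lemma unif_mean_sqr_legendre_sum N (a : nat -> R) :
  unif_mean ((\sum_(j < N) a j *: legendre j) ^+ 2) =
  \sum_(j < N) a j ^+ 2 / (2 * j + 1)%:R.
Proof.
rewrite expr2 mulr_suml linear_sum; apply: eq_bigr => i _.
rewrite mulr_sumr linear_sum (bigD1 i) //= big1 ?addr0 => [|j neq_ji].
  rewrite -scalerAl -scalerAr !linearZ /= -expr2 mulrA -expr2.
  rewrite -[unif_mean _](@mulKf _ (2 * i + 1)%:R); last by rewrite pnatr_eq0 addn1.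
  by rewrite unif_mean_legendre_sqr mulr1.
by rewrite -scalerAl -scalerAr !linearZ /= unif_mean_legendre_mul ?mulr0 // eq_sym.
Qed.

End Legendre.

Section CoefNorm.
Variable R : realFieldType.
Implicit Types (p q : {poly R}) (n k : nat).

Definition poly_norm1 p : R := \sum_(i < size p) `|p`_i|.

Lemma poly_norm1_wide n p : (size p <= n)%N -> poly_norm1 p = \sum_(i < n) `|p`_i|.
Proof.
move=> le_pn; rewrite /poly_norm1 -(subnKC le_pn) big_split_ord /=.
by rewrite [X in _ + X]big1 ?addr0 // => i _; rewrite nth_default ?normr0 // leq_addr.
Qed.

Lemma poly_norm1_1 : poly_norm1 1 = 1.
Proof. by rewrite /poly_norm1 size_poly1 big_ord1 coefC normr1. Qed.

Lemma poly_norm1_ge0 p : 0 <= poly_norm1 p.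
Proof. exact: sumr_ge0. Qed.

Lemma poly_norm1D p q : poly_norm1 (p + q) <= poly_norm1 p + poly_norm1 q.
Proof.
pose n := maxn (size p) (size q).
rewrite !(@poly_norm1_wide n) ?leq_maxl ?leq_maxr ?size_polyD // -big_split /=.
by apply: ler_sum => i _; rewrite coefD ler_normD.
Qed.

Lemma poly_norm1Z c p : poly_norm1 (c *: p) = `|c| * poly_norm1 p.
Proof.
rewrite !(@poly_norm1_wide (size p)) ?size_scale_leq // mulr_sumr.
by apply: eq_bigr => i _; rewrite coefZ normrM.
Qed.

Lemma poly_norm1N p : poly_norm1 (- p) = poly_norm1 p.
Proof. by rewrite -scaleN1r poly_norm1Z normrN1 mul1r. Qed.

Lemma poly_norm1_natM k p : poly_norm1 (k%:R * p) = k%:R * poly_norm1 p.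
Proof. by rewrite -polyC_natr mul_polyC poly_norm1Z normr_nat. Qed.

Lemma poly_norm1MX p : poly_norm1 (p * 'X) = poly_norm1 p.
Proof.
rewrite (@poly_norm1_wide (size p).+1 (p * 'X)); last first.
  by apply/leq_sizeP => -[|j] lt_pj; rewrite coefMX // nth_default.
by rewrite big_ord_recl coefMX normr0 add0r; apply: eq_bigr => i _; rewrite coefMX.
Qed.

Lemma poly_norm1_legendreS n : n.+1%:R * poly_norm1 (legendre R n.+1) <=
  (2 * n + 1)%:R * poly_norm1 (legendre R n) + n%:R * poly_norm1 (legendre R n.-1).
Proof.
rewrite -poly_norm1_natM legendreS (le_trans (poly_norm1D _ _)) //.
by rewrite poly_norm1N !poly_norm1_natM poly_norm1MX.
Qed.

(* d_n = 2 binom(2n+2, n+1) / 4^(n+1) ~ 1 / sqrt n: (2n+1) d_n^2 stays bounded, so d_n stands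
   in for 1 / sqrt(2n+1) without square roots. *)
Definition legendre_majorant n : R := \prod_(k < n) ((2 * k + 3)%:R / (2 * k + 4)%:R).

Lemma legendre_majorant0 : legendre_majorant 0 = 1.
Proof. exact: big_ord0. Qed.

Lemma legendre_majorantS n : legendre_majorant n.+1 =
  legendre_majorant n * ((2 * n + 3)%:R / (2 * n + 4)%:R).
Proof. by rewrite /legendre_majorant big_ord_recr. Qed.

Lemma legendre_majorant_gt0 n : 0 < legendre_majorant n.
Proof. by apply: prodr_gt0 => k _; rewrite divr_gt0 ?ltr0n ?addn3 ?addn4. Qed.

Lemma legendre_majorant_sqr_le n : (2 * n + 1)%:R * legendre_majorant n ^+ 2 <= 3.
Proof.
suff le3 m : (2 * m + 3)%:R * legendre_majorant m ^+ 2 <= 3.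
  by apply: le_trans (le3 n); rewrite ler_wpM2r ?sqr_ge0 // ler_nat; lia.
elim: m => [|m IH]; first by rewrite legendre_majorant0 expr1n mulr1.
apply: le_trans IH; rewrite legendre_majorantS exprMn mulrCA [in leRHS]mulrC.
rewrite ler_wpM2l ?sqr_ge0 // expr_div_n mulrA ler_pdivrMr ?exprn_gt0 ?ltr0n ?addn4 //.
rewrite -!natrX -!natrM ler_nat; nia.
Qed.

Lemma legendre_majorant_step r n : 0 <= r -> 2 * r + 1 <= r ^+ 2 ->
  (2 * n + 3)%:R * (r ^+ n.+1 * legendre_majorant n.+1) +
    n.+1%:R * (r ^+ n * legendre_majorant n) <=
  n.+2%:R * (r ^+ n.+2 * legendre_majorant n.+2).
Proof.
move=> r_ge0 r_sqr; rewrite !legendre_majorantS !exprS.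
have d_gt0 := legendre_majorant_gt0 n; set d := legendre_majorant n in d_gt0 *.
have rn_ge0 : 0 <= r ^+ n by rewrite exprn_ge0.
set rn := r ^+ n in rn_ge0 *; set x : R := n%:R; have x_ge0 : 0 <= x by rewrite ler0n.
have -> : (2 * n + 3)%:R = 2 * x + 3 :> R by rewrite natrD natrM.
have -> : (2 * n.+1 + 3)%:R = 2 * x + 5 :> R by rewrite /x -addn1 !(natrD, natrM); ring.
have -> : (2 * n.+1 + 4)%:R = 2 * x + 6 :> R by rewrite /x -addn1 !(natrD, natrM); ring.
have -> : (2 * n + 4)%:R = 2 * x + 4 :> R by rewrite natrD natrM.
have -> : n.+1%:R = x + 1 :> R by rewrite /x -addn1 natrD.
have -> : n.+2%:R = x + 2 :> R by rewrite /x -addn2 natrD.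
rewrite -subr_ge0.
have -> : (x + 2) *
      (r * (r * rn) * (d * ((2 * x + 3) / (2 * x + 4)) * ((2 * x + 5) / (2 * x + 6)))) -
    ((2 * x + 3) * (r * rn * (d * ((2 * x + 3) / (2 * x + 4)))) + (x + 1) * (rn * d)) =
  rn * d / (2 * (2 * x + 4) * (2 * x + 6)) *
    ((r ^+ 2 - 2 * r - 1) * (2 * x + 3) * (2 * x + 5) * (2 * x + 4) +
     4 * r * (2 * x + 3) + 3 * (2 * x + 4)).
  by field; lra.
apply: mulr_ge0; first by rewrite divr_ge0 ?mulr_ge0 ?(ltW d_gt0) //; lra.
by rewrite !addr_ge0 ?mulr_ge0 //; lra.
Qed.

Lemma poly_norm1_legendre_le r n : 0 <= r -> 2 * r + 1 <= r ^+ 2 ->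
  poly_norm1 (legendre R n) <= r ^+ n * legendre_majorant n.
Proof.
move=> r_ge0 r_sqr; elim/ltn_ind: n => -[|[|n]] IH.
- by rewrite legendre0 poly_norm1_1 legendre_majorant0 mulr1.
- rewrite legendre1 -[X in poly_norm1 X]mul1r poly_norm1MX poly_norm1_1.
  by rewrite legendre_majorantS legendre_majorant0 mul1r expr1 !muln0 !add0n; nra.
rewrite -(@ler_pM2l _ n.+2%:R) ?ltr0n //.
apply: le_trans (poly_norm1_legendreS n.+1) _.
have -> : (2 * n.+1 + 1 = 2 * n + 3)%N by lia.
apply: le_trans (legendre_majorant_step n r_ge0 r_sqr).
by apply: lerD; rewrite ler_wpM2l ?IH.
Qed.

End CoefNorm.

Section CauchySchwarz.
Variables (R : realFieldType) (I : finType).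
Implicit Types (x y w : I -> R).

Lemma sum_sqr_le_sqr_sum x : (forall i, 0 <= x i) -> \sum_i x i ^+ 2 <= (\sum_i x i) ^+ 2.
Proof.
move=> x_ge0; rewrite expr2 mulr_suml; apply: ler_sum => i _.
rewrite expr2 ler_wpM2l // (bigD1 i) //= lerDl.
by apply: sumr_ge0 => j _.
Qed.

Lemma cauchy_schwarz_weighted w x y : (forall i, 0 < w i) ->
  (\sum_i x i * y i) ^+ 2 <= (\sum_i x i ^+ 2 / w i) * (\sum_i w i * y i ^+ 2).
Proof.
move=> w_gt0; set S := \sum_i x i * y i.
set A := \sum_i x i ^+ 2 / w i; set B := \sum_i w i * y i ^+ 2.
have wy_ge0 i : true -> 0 <= w i * y i ^+ 2 by rewrite mulr_ge0 ?sqr_ge0 ?ltW.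
have quad_ge0 t : 0 <= A - 2 * t * S + t ^+ 2 * B.
  have -> : A - 2 * t * S + t ^+ 2 * B = \sum_i (x i - t * w i * y i) ^+ 2 / w i.
    rewrite /A /S /B mulr_sumr mulr_sumr -sumrB -big_split /=; apply: eq_bigr => i _.
    by field; rewrite gt_eqF.
  by apply: sumr_ge0 => i _; rewrite divr_ge0 ?sqr_ge0 ?ltW.
have [B0|B_gt0] := eqVneq B 0.
  have y0 i : y i = 0.
    have /(psumr_eq0P wy_ge0)/(_ i isT)/eqP := B0.
    by rewrite mulf_eq0 gt_eqF //= sqrf_eq0 => /eqP.
  by rewrite /S big1 ?expr0n ?B0 ?mulr0 // => i _; rewrite y0 mulr0.
have {}B_gt0 : 0 < B by rewrite lt_def B_gt0 sumr_ge0.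
have := quad_ge0 (S / B).
have -> : A - 2 * (S / B) * S + (S / B) ^+ 2 * B = (A * B - S ^+ 2) / B.
  by field; rewrite gt_eqF.
by rewrite ler_pdivlMr // mul0r subr_ge0.
Qed.

Lemma cauchy_schwarz x y : (\sum_i x i * y i) ^+ 2 <= (\sum_i x i ^+ 2) * (\sum_i y i ^+ 2).
Proof.
have <- : \sum_i x i ^+ 2 / 1 = \sum_i x i ^+ 2 by under eq_bigr do rewrite divr1.
have <- : \sum_i 1 * y i ^+ 2 = \sum_i y i ^+ 2 by under eq_bigr do rewrite mul1r.
exact: cauchy_schwarz_weighted.
Qed.

End CauchySchwarz.

Section HankelForms.
Variables (R : realFieldType) (N : nat).
Implicit Types (y : 'cV[R]_N) (A : 'M[R]_N) (s : nat -> R).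

Definition sqnorm y : R := \sum_i y i 0 ^+ 2.
Definition qform A y : R := \sum_i y i 0 * (A *m y) i 0.
Definition hankel s : 'M[R]_N := \matrix_(i, j) s (i + j)%N.
Definition vpoly y : {poly R} := \sum_(k < N) y k 0 *: 'X^k.

Lemma sqnorm_ge0 y : 0 <= sqnorm y.
Proof. by apply: sumr_ge0 => i _; apply: sqr_ge0. Qed.

Lemma qform_hankel s y :
  qform (hankel s) y = \sum_i \sum_j y i 0 * y j 0 * s (i + j)%N.
Proof.
rewrite /qform; apply: eq_bigr => i _; rewrite mxE mulr_sumr; apply: eq_bigr => j _.
by rewrite mxE [s _ * _]mulrC mulrA.
Qed.

Lemma size_vpoly y : (size (vpoly y) <= N)%N.
Proof.
apply/leq_sizeP => j le_Nj; rewrite coef_sum big1 // => k _.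
by rewrite coefZ coefXn gtn_eqF ?mulr0 // (leq_trans _ le_Nj).
Qed.

Lemma coef_vpoly y (k : 'I_N) : (vpoly y)`_k = y k 0.
Proof.
rewrite coef_sum (bigD1 k) //= coefZ coefXn eqxx mulr1 big1 ?addr0 // => j neq_jk.
by rewrite coefZ coefXn eq_sym (negbTE (neq_jk : val j != val k)) mulr0.
Qed.

Lemma unif_mean_vpoly_sqr y : unif_mean (vpoly y ^+ 2) = qform (hankel (@unif_moment R)) y.
Proof.
rewrite qform_hankel expr2 mulr_suml linear_sum; apply: eq_bigr => i _.
rewrite mulr_sumr linear_sum; apply: eq_bigr => j _.
by rewrite -scalerAl -scalerAr -exprD !linearZ /= unif_meanXn mulrA.
Qed.

End HankelForms.

Section ContinuousCoercivity.
Variable R : realFieldType.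

Lemma geometric_sum_le (g : R) n : 2 <= g -> \sum_(j < n) g ^+ j <= g ^+ n.
Proof.
move=> g_ge2; elim: n => [|n IH]; first by rewrite big_ord0 expr0 ler01.
have g1 : 1 <= g ^+ n by rewrite exprn_ege1 //; lra.
by rewrite big_ord_recr exprS /=; nra.
Qed.

Lemma legendre_coef_sqr_sum_le r N j : 0 <= r -> 2 * r + 1 <= r ^+ 2 -> (j < N)%N ->
  (2 * j + 1)%:R * \sum_(k < N) (legendre R j)`_k ^+ 2 <= 3 * (r ^+ 2) ^+ j.
Proof.
move=> r_ge0 r_sqr lt_jN.
have norm1E : poly_norm1 (legendre R j) = \sum_(k < N) `|(legendre R j)`_k|.
  exact/poly_norm1_wide/(leq_trans (size_legendre_le _ _)).
have sum_le : \sum_(k < N) (legendre R j)`_k ^+ 2 <= (r ^+ j * legendre_majorant R j) ^+ 2.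
  apply: le_trans (_ : _ <= poly_norm1 (legendre R j) ^+ 2) _.
    rewrite norm1E -(eq_bigr _ (fun (k : 'I_N) _ => real_normK (num_real (legendre R j)`_k))).
    exact: sum_sqr_le_sqr_sum.
  rewrite ler_sqr ?nnegrE ?poly_norm1_ge0 ?poly_norm1_legendre_le //.
  exact: mulr_ge0 (exprn_ge0 _ r_ge0) (ltW (legendre_majorant_gt0 _ _)).
apply: le_trans (ler_wpM2l (ler0n _ _) sum_le) _.
rewrite exprMn exprAC mulrCA mulrC ler_wpM2r ?exprn_ge0 ?sqr_ge0 //.
exact: legendre_majorant_sqr_le.
Qed.

Lemma sqnorm_le_unif_mean_vpoly r N (y : 'cV[R]_N) : 0 <= r -> 2 * r + 1 <= r ^+ 2 ->
  sqnorm y <= 3 * (r ^+ 2) ^+ N * unif_mean (vpoly y ^+ 2).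
Proof.
move=> r_ge0 r_sqr; have [a Ea] := legendre_basis (size_vpoly y).
have y_coef (k : 'I_N) : y k 0 = \sum_(j < N) a j * (legendre R j)`_k.
  by rewrite -coef_vpoly Ea coef_sum; apply: eq_bigr => j _; rewrite coefZ.
rewrite Ea unif_mean_sqr_legendre_sum; set L := \sum_(j < N) _.
have L_ge0 : 0 <= L by apply: sumr_ge0 => j _; rewrite divr_ge0 ?sqr_ge0.
have y_sqr_le (k : 'I_N) :
    y k 0 ^+ 2 <= L * \sum_(j < N) (2 * j + 1)%:R * (legendre R j)`_k ^+ 2.
  by rewrite y_coef; apply: cauchy_schwarz_weighted => j; rewrite ltr0n addn1.
apply: le_trans (ler_sum _ (fun k _ => y_sqr_le k)) _.
rewrite -mulr_sumr exchange_big /= mulrC ler_wpM2r //.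
apply: le_trans (_ : _ <= \sum_(j < N) 3 * (r ^+ 2) ^+ j) _.
  by apply: ler_sum => j _; rewrite -mulr_sumr legendre_coef_sqr_sum_le.
by rewrite -mulr_sumr ler_wpM2l // geometric_sum_le //; nra.
Qed.

End ContinuousCoercivity.

Section GridMoments.
Variable R : realFieldType.
Implicit Types (a b u w x : R) (n k M : nat).

Lemma norm_subrX_le k u w : `|u| <= 1 -> `|w| <= 1 -> `|u ^+ k - w ^+ k| <= k%:R * `|u - w|.
Proof.
move=> u_le1 w_le1; elim: k => [|k IH]; first by rewrite subrr normr0 mul0r.
have -> : u ^+ k.+1 - w ^+ k.+1 = u * (u ^+ k - w ^+ k) + w ^+ k * (u - w).
  by rewrite !exprS; ring.
apply: le_trans (ler_normD _ _) _; rewrite !normrM -natr1 mulrDl mul1r.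
apply: lerD; first by apply: le_trans IH; rewrite ler_piMl.
by rewrite ler_piMl // normrX exprn_ile1.
Qed.

Lemma dist_pow_mixed_le a x b n i : -1 <= a -> a <= x -> x <= b -> b <= 1 -> (i <= n)%N ->
  `|x ^+ n - b ^+ (n - i) * a ^+ i| <= n%:R * (b - a).
Proof.
move=> a_ge x_ge x_le b_le le_in.
have na : `|a| <= 1 by rewrite ler_norml; lra.
have nx : `|x| <= 1 by rewrite ler_norml; lra.
have nb : `|b| <= 1 by rewrite ler_norml; lra.
have -> : x ^+ n - b ^+ (n - i) * a ^+ i =
    (x ^+ (n - i) - b ^+ (n - i)) * x ^+ i + b ^+ (n - i) * (x ^+ i - a ^+ i).
  by rewrite -{1}(subnK le_in) exprD; ring.
have high : `|x ^+ (n - i) - b ^+ (n - i)| <= (n - i)%:R * (b - x).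
  by apply: le_trans (norm_subrX_le _ nx nb) _; rewrite distrC ger0_norm ?subr_ge0.
have low : `|x ^+ i - a ^+ i| <= i%:R * (x - a).
  by apply: le_trans (norm_subrX_le _ nx na) _; rewrite ger0_norm ?subr_ge0.
apply: le_trans (ler_normD _ _) _; rewrite !normrM !normrX.
rewrite -[n in n%:R * _](subnK le_in) natrD mulrDl; apply: lerD.
  apply: le_trans (ler_piMr _ (exprn_ile1 _ _ nx)) _ => //.
  by apply: le_trans high _; rewrite ler_wpM2l //; lra.
apply: le_trans (ler_piMl _ (exprn_ile1 _ _ nb)) _ => //.
by apply: le_trans low _; rewrite ler_wpM2l //; lra.
Qed.

(* (b^(n+1) - a^(n+1)) / ((n+1)(b-a)), the mean of t^n over [a, b]. *)
Definition mean_pow a b n : R := n.+1%:R^-1 * \sum_(i < n.+1) b ^+ (n - i) * a ^+ i.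

Lemma mean_pow_err a x b n : -1 <= a -> a <= x -> x <= b -> b <= 1 ->
  `|x ^+ n - mean_pow a b n| <= n%:R * (b - a).
Proof.
move=> a_ge x_ge x_le b_le; have n1_gt0 : 0 < n.+1%:R^-1 :> R by rewrite invr_gt0 ltr0n.
have -> : x ^+ n - mean_pow a b n =
    n.+1%:R^-1 * \sum_(i < n.+1) (x ^+ n - b ^+ (n - i) * a ^+ i).
  by rewrite sumrB sumr_const card_ord mulrBr -[x ^+ n *+ _]mulr_natl mulKf ?pnatr_eq0.
rewrite normrM gtr0_norm //; apply: le_trans (ler_wpM2l (ltW n1_gt0) (ler_norm_sum _ _ _)) _.
have term_le (i : 'I_n.+1) := dist_pow_mixed_le a_ge x_ge x_le b_le (ltnSE (ltn_ord i)).
apply: le_trans (ler_wpM2l (ltW n1_gt0) (ler_sum _ (fun i _ => term_le i))) _.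
by rewrite sumr_const card_ord -[n%:R * _ *+ _]mulr_natl mulKf ?pnatr_eq0.
Qed.

Definition grid M m : R := -1 + 2 * m%:R / M%:R.

Lemma unif_moment_grid M n : (0 < M)%N ->
  unif_moment R n = M%:R^-1 * \sum_(m < M) mean_pow (grid M m) (grid M m.+1) n.
Proof.
move=> M_gt0; have M_neq0 : M%:R != 0 :> R by rewrite pnatr_eq0 -lt0n.
have cell m : mean_pow (grid M m) (grid M m.+1) n =
    M%:R / 2 / n.+1%:R * (grid M m.+1 ^+ n.+1 - grid M m ^+ n.+1).
  rewrite subrXX /mean_pow /= (_ : grid M m.+1 - grid M m = 2 / M%:R).
    by field; rewrite M_neq0 addrC natr1 pnatr_eq0.
  by rewrite /grid -natr1; field.
rewrite (eq_bigr _ (fun (m : 'I_M) _ => cell m)) -mulr_sumr -(big_mkord xpredT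
  (fun m => grid M m.+1 ^+ n.+1 - grid M m ^+ n.+1)) telescope_sumr //.
have -> : grid M M = 1 by rewrite /grid mulfK //; lra.
have -> : grid M 0 = -1 by rewrite /grid mulr0 mul0r addr0.
apply: (@mulfI _ n.+1%:R); first by rewrite pnatr_eq0.
rewrite unif_moment_telescope expr1n; set t := (-1) ^+ _.
by field; rewrite M_neq0 addrC natr1 pnatr_eq0.
Qed.

Lemma riemann_moment_err M n (x : nat -> R) : (0 < M)%N ->
    (forall m, (m < M)%N -> grid M m <= x m <= grid M m.+1) ->
  `|M%:R^-1 * \sum_(m < M) x m ^+ n - unif_moment R n| <= 2 * n%:R / M%:R.
Proof.
move=> M_gt0 x_grid; have M_gt0' : 0 < M%:R :> R by rewrite ltr0n.
rewrite (unif_moment_grid n M_gt0) -mulrBr -sumrB normrM gtr0_norm ?invr_gt0 //.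
apply: le_trans (ler_wpM2l _ (ler_norm_sum _ _ _)) _; first by rewrite invr_ge0 ltW.
apply: le_trans (_ : _ <= M%:R^-1 * \sum_(m < M) n%:R * (2 / M%:R)) _.
  rewrite ler_wpM2l ?invr_ge0 ?ler0n //; apply: ler_sum => m _.
  have /andP[lo hi] := x_grid m (ltn_ord m).
  have -> : 2 / M%:R = grid M m.+1 - grid M m by rewrite /grid -natr1; field; rewrite gt_eqF.
  apply: mean_pow_err => //; rewrite /grid.
    by rewrite lerDl divr_ge0 ?mulr_ge0 ?ler0n.
  have : m.+1%:R / M%:R <= 1 :> R by rewrite ler_pdivrMr // mul1r ler_nat.
  by rewrite -mulrA; lra.
rewrite sumr_const card_ord -[n%:R * _ *+ _]mulr_natl.
by rewrite mulKf ?gt_eqF // mulrA [n%:R * 2]mulrC.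
Qed.

End GridMoments.

Section Coercive.
Variables (R : realFieldType) (N : nat).
Implicit Types (y u : 'cV[R]_N) (A : 'M[R]_N).

Lemma qform_hankel_perturb (s t : nat -> R) e y : 0 <= e ->
    (forall n, (n < 2 * N)%N -> `|s n - t n| <= e) ->
  `|qform (hankel N s) y - qform (hankel N t) y| <= N%:R * e * sqnorm y.
Proof.
move=> e_ge0 st_le; rewrite !qform_hankel -sumrB.
apply: le_trans (ler_norm_sum _ _ _) _.
apply: le_trans (_ : _ <= \sum_i \sum_j `|y i 0| * `|y j 0| * e) _.
  apply: ler_sum => i _; rewrite -sumrB; apply: le_trans (ler_norm_sum _ _ _) _.
  apply: ler_sum => j _; rewrite -mulrBr normrM normrM ler_wpM2l ?mulr_ge0 //.
  by apply: st_le; have := ltn_ord i; have := ltn_ord j; lia.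
have -> : \sum_i \sum_j `|y i 0| * `|y j 0| * e = e * (\sum_i 1 * `|y i 0|) ^+ 2.
  rewrite expr2 mulr_suml mulr_sumr; apply: eq_bigr => i _.
  by rewrite mulr_sumr mulr_sumr; apply: eq_bigr => j _; ring.
rewrite [N%:R * e]mulrC -mulrA ler_wpM2l //; apply: le_trans (cauchy_schwarz _ _) _.
rewrite sumr_const card_ord expr1n.
by under eq_bigr do rewrite (real_normK (num_real _)).
Qed.

Lemma coercive_unitmx A c : (forall y, sqnorm y <= c * qform A y) -> A \in unitmx.
Proof.
move=> coer; rewrite -unitmx_tr -row_free_unit; apply/inj_row_free => v vA0.
have Av0 : A *m v^T = 0 by rewrite -[A]trmxK -trmx_mul vA0 trmx0.
have : sqnorm v^T <= 0.
  by rewrite (le_trans (coer _)) // /qform Av0 big1 ?mulr0 // => i _; rewrite !mxE mulr0.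
move=> le0; have /psumr_eq0P sq0 : sqnorm v^T = 0.
  by apply/eqP; rewrite eq_le le0 sqnorm_ge0.
apply/rowP => j; have /eqP := sq0 (fun i _ => sqr_ge0 _) j isT.
by rewrite sqrf_eq0 !mxE => /eqP.
Qed.

Lemma coercive_invmx_le A c : (forall y, sqnorm y <= c * qform A y) ->
  forall u, sqnorm (invmx A *m u) <= c ^+ 2 * sqnorm u.
Proof.
move=> coer u; set y := invmx A *m u.
have Ay : A *m y = u by rewrite mulKVmx ?(coercive_unitmx coer).
have := coer y; rewrite /qform Ay; set P := \sum_i _ => Y_le.
have P_sqr : P ^+ 2 <= sqnorm y * sqnorm u := cauchy_schwarz _ _.
have [Y0|Y_neq0] := eqVneq (sqnorm y) 0.
  by rewrite Y0 mulr_ge0 ?sqr_ge0 ?sqnorm_ge0.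
have Y_gt0 : 0 < sqnorm y by rewrite lt_def Y_neq0 sqnorm_ge0.
rewrite -(ler_pM2l Y_gt0); apply: le_trans (_ : _ <= (c * P) * (c * P)) _.
  by apply: ler_pM; rewrite ?sqnorm_ge0.
by rewrite mulrACA -!expr2 [leRHS]mulrCA ler_wpM2l ?sqr_ge0.
Qed.

End Coercive.

Section Lift.
Variables (R : realType) (N : nat).
Implicit Types (A : 'M[R]_N) (u : nat -> R).

Lemma lift_l2_ord A u (i : 'I_N) : lift_l2 A u i = (A *m \col_j u j) i 0.
Proof. by rewrite /lift_l2 valK mxE; apply: eq_bigr => j _; rewrite mxE. Qed.

Lemma lift_l2_out A u k : (N <= k)%N -> lift_l2 A u k = 0.
Proof. by move=> le_Nk; rewrite /lift_l2 insubN // -leqNgt. Qed.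

Lemma l2norm2_lift_l2 A u : l2norm2 (lift_l2 A u) = (sqnorm (A *m \col_j u j))%:E.
Proof.
rewrite /l2norm2 (@nneseries_split R _ 0 N); last by move=> k _; rewrite lee_fin sqr_ge0.
rewrite add0n eseries0 ?adde0 => [|k le_Nk _]; last by rewrite lift_l2_out ?expr0n.
by rewrite big_mkord sumEFin; congr (_%:E); apply: eq_bigr => i _; rewrite lift_l2_ord.
Qed.

Lemma sqnorm_col_le_l2norm2 u : ((sqnorm (\col_(j < N) u j))%:E <= l2norm2 u)%E.
Proof.
have -> : sqnorm (\col_(j < N) u j) = \sum_(j < N) u j ^+ 2.
  by apply: eq_bigr => j _; rewrite mxE.
rewrite -sumEFin -(big_mkord xpredT (fun k => (u k ^+ 2)%:E)).
by apply: nneseries_lim_ge => k _ _; rewrite lee_fin sqr_ge0.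
Qed.

Lemma opnorm_le_lift_l2 A c :
  (forall v : 'cV_N, sqnorm (A *m v) <= c ^+ 2 * sqnorm v) -> opnorm_le (lift_l2 A) c.
Proof.
move=> A_le u _; rewrite l2norm2_lift_l2.
apply: le_trans (_ : _ <= ((c ^+ 2)%:E * (sqnorm (\col_j u j))%:E))%E _.
  by rewrite -EFinM lee_fin.
by rewrite lee_wpmul2l ?lee_fin ?sqr_ge0 ?sqnorm_col_le_l2norm2.
Qed.

End Lift.

Section GridGram.
Variable R : realType.

Lemma hatH_hankel N M (delta : R) :
  hatH N M delta = hankel N (fun n => M%:R^-1 * \sum_(m < M) xpt M delta m ^+ n).
Proof. by apply/matrixP => i j; rewrite !mxE big_mkord; under eq_bigr do rewrite -exprD. Qed.

Lemma xpt_grid M (delta : R) m : 0 <= delta -> delta <= 2 / M%:R ->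
  grid R M m <= xpt M delta m <= grid R M m.+1.
Proof.
move=> delta_ge0 delta_le; rewrite /xpt /grid -[m.+1%:R]natr1 mulrDr mulr1 mulrDl.
apply/andP; split; lra.
Qed.

Lemma sqnorm_le_qform_unif_hankel N (y : 'cV[R]_N) :
  sqnorm y <= 3 * gamma R ^+ N * qform (hankel N (@unif_moment R)) y.
Proof.
have r_ge0 : 0 <= 1 + Num.sqrt 2 :> R by rewrite addr_ge0 ?sqrtr_ge0.
have r_sqr : 2 * (1 + Num.sqrt 2) + 1 <= (1 + Num.sqrt 2) ^+ 2 :> R.
  by rewrite sqrrD sqr_sqrtr ?expr1n ?mulr1 //; lra.
by rewrite -unif_mean_vpoly_sqr; apply: sqnorm_le_unif_mean_vpoly.
Qed.

Lemma qform_hatH_unif_err N M (delta : R) (y : 'cV[R]_N) : (0 < M)%N ->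
    0 <= delta -> delta <= 2 / M%:R ->
  `|qform (hatH N M delta) y - qform (hankel N (@unif_moment R)) y| <=
    N%:R * (4 * N%:R / M%:R) * sqnorm y.
Proof.
move=> M_gt0 delta_ge0 delta_le; rewrite hatH_hankel.
apply: qform_hankel_perturb => [|n lt_n]; first by rewrite divr_ge0 ?mulr_ge0 ?ler0n.
apply: le_trans (riemann_moment_err n M_gt0 (fun m _ => xpt_grid m delta_ge0 delta_le)) _.
by rewrite ler_wpM2r ?invr_ge0 ?ler0n // -!natrM ler_nat; lia.
Qed.

Lemma sqnorm_le_qform_hatH N M (delta : R) (y : 'cV[R]_N) : (0 < M)%N ->
    0 <= delta -> delta <= 2 / M%:R -> 24 * N%:R ^+ 2 * gamma R ^+ N <= M%:R ->
  sqnorm y <= 6 * gamma R ^+ N * qform (hatH N M delta) y.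
Proof.
move=> M_gt0 delta_ge0 delta_le M_ge.
have := qform_hatH_unif_err y M_gt0 delta_ge0 delta_le.
rewrite ler_norml => /andP[near _]; have unif := sqnorm_le_qform_unif_hankel y.
have S_ge0 := sqnorm_ge0 y; have g_ge0 : 0 <= gamma R ^+ N by rewrite exprn_ge0 ?sqr_ge0.
set S := sqnorm y in near unif S_ge0 *; set g := gamma R ^+ N in M_ge unif g_ge0 *.
set e := N%:R * (4 * N%:R / M%:R) in near *.
have small : 3 * g * e <= 1 / 2.
  have -> : 3 * g * e = 24 * N%:R ^+ 2 * g / M%:R / 2.
    by rewrite /e; field; rewrite pnatr_eq0 -lt0n.
  by rewrite ler_pM2r ?invr_gt0 // ler_pdivrMr ?ltr0n // mul1r.
nra.
Qed.

End GridGram.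

Theorem lemma12 (R : realType) :
  exists C1 C2 : R, 0 < C1 /\ 0 < C2 /\
    forall (N M : nat) (delta : R),
      (0 < M)%N -> 0 <= delta -> delta <= 2 / M%:R ->
      C1 * N%:R ^+ 2 * gamma R ^+ N <= M%:R ->
      hatH N M delta \in unitmx /\
      opnorm_le (lift_l2 (invmx (hatH N M delta))) (C2 * gamma R ^+ N).
Proof.
exists 24, 6; split; first lra; split; first lra.
move=> N M delta M_gt0 delta_ge0 delta_le M_ge.
have coer y := sqnorm_le_qform_hatH y M_gt0 delta_ge0 delta_le M_ge.
split; first exact: coercive_unitmx coer.
exact/opnorm_le_lift_l2/coercive_invmx_le.
Qed.
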